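(* Fix an integer $m>1$, $L>0$, $T>0$, put $h=L/m$, and let weights $w_0=0$, $w_1,\dots,w_{m-1}$ be given such that the matrix $M^*$ defined below is invertible. Let $F\in\mathbb{R}^{m-1}$ and $(U^0,V^0)\in\mathbb{R}^{m-1}\times\mathbb{R}^{m-1}$ be given, and let $\mathcal{U}_h=(U_h,V_h)\in \mathrm{C}^1([0,T];\mathbb{R}^{m-1}\times\mathbb{R}^{m-1})$ be the solution of $$\mathcal{U}_h'(t)=G(\mathcal{U}_h(t)),\quad t\in[0,T],\qquad \mathcal{U}_h(0)=(U^0,V^0),$$ where for $\mathcal{U}=(U,V)$ with $U=(u_1,\dots,u_{m-1})^{\mathsf T}$, $$G(\mathcal{U})=\Big(\tfrac1h (M^* )^{-1}V,\; -\tfrac1h S^*U+F+\tfrac1h u_1^+e_1\Big).$$ For $N\in\mathbb{N}$ set $\Delta t=T/N$, $t_n=n\Delta t$, and call a sequence $(\mathcal{U}^n)_{n=0}^N$ a Crank–Nicolson sequence if $\mathcal{U}^0=\mathcal{U}_h(0)$ and $$\frac{\mathcal{U}^{n+1}-\mathcal{U}^n}{\Delta t}=\frac12\big(G(\mathcal{U}^{n+1})+G(\mathcal{U}^n)\big),\qquad n=0,\dots,N-1.$$ Then the time discretization error of the Crank–Nicolson method is of order $\Delta t$: there exist constants $\delta>0$ and $K>0$ (which may depend on $h$, $T$ and the data, but not on $\Delta t$) such that for every $N$ with $\Delta t=T/N<\delta$ and every Crank–Nicolson sequence $(\mathcal{U}^n)$, $$\max_{0\le n\le N}\|\mathcal{U}_h(t_n)-\mathcal{U}^n\|\le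 K\,\Delta t .$$
   Context: $\|\cdot\|$ is the Euclidean norm on $\mathbb{R}^{m-1}\times\mathbb{R}^{m-1}$, $s^+=\max(s,0)$, $e_1=(1,0,\dots,0)^{\mathsf T}\in\mathbb{R}^{m-1}$. Hat functions on $[0,L]$ with nodes $kh$: $\varphi_0(x)=1-x/h$ on $[0,h)$ and $0$ for $x\ge h$; for $k=1,\dots,m-1$, $\varphi_k(x)=x/h-k+1$ on $[(k-1)h,kh)$, $k+1-x/h$ on $[kh,(k+1)h)$, $0$ otherwise. The weight function is $w_h(x)=w_j$ for $x\in[jh,(j+1)h)$, $j=0,\dots,m-1$ (with $w_0=0$). The matrices $M^*,S^*\in\mathbb{R}^{(m-1)\times(m-1)}$ are given for $i,k=1,\dots,m-1$ by $M^*_{ik}=\frac1h\int_0^L\varphi_i\varphi_k w_h\,dx$ and $S^*_{ik}=h\int_0^L\varphi_i'\varphi_k'\,dx$. (This ODE is the reformulation of the spatially semi-discrete mass-redistributed contact problem for the 1D wave equation, after elimination of the contact node via $u_0=u_1^+$.) *)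

From HB Require Import structures.
From mathcomp Require Import all_boot all_order all_algebra.
From mathcomp Require Import all_classical all_reals all_analysis.
Unset Printing Implicit Defensive.
Import Order.TTheory GRing.Theory Num.Theory.
Import numFieldNormedType.Exports.
Local Open Scope classical_set_scope.
Local Open Scope ring_scope.

Section Defs.
Context {R : realType}.

Definition hat (h : R) (k : nat) (x : R) : R :=
  if k is 0%N then (if (0 <= x) && (x < h) then 1 - x / h else 0)
  else if ((k%:R - 1) * h <= x) && (x < k%:R * h) then x / h - k%:R + 1
  else if (k%:R * h <= x) && (x < (k%:R + 1) * h) then k%:R + 1 - x / h
  else 0.

(* The (a.e.) derivative of hat h k for k >= 1, written out piecewise. *)
Definition dhat (h : R) (k : nat) (x : R) : R :=
  if ((k%:R - 1) * h <= x) && (x < k%:R * h) then h^-1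
  else if (k%:R * h <= x) && (x < (k%:R + 1) * h) then - h^-1
  else 0.

Definition wh (m : nat) (h : R) (w : nat -> R) (x : R) : R :=
  \sum_(j < m) (if (j%:R * h <= x) && (x < (j%:R + 1) * h) then w j else 0).

(* Indices i = 1..m-1 are represented by i' : 'I_(m.-1) with i = i'.+1. *)
Definition Mstar (m : nat) (L : R) (w : nat -> R) : 'M[R]_(m.-1) :=
  let h := L / m%:R in
  \matrix_(i, k) (h^-1 * \int[@lebesgue_measure R]_(x in `[0, L])
                      (hat h i.+1 x * hat h k.+1 x * wh m h w x)).

Definition Sstar (m : nat) (L : R) : 'M[R]_(m.-1) :=
  let h := L / m%:R in
  \matrix_(i, k) (h * \int[@lebesgue_measure R]_(x in `[0, L])
                      (dhat h i.+1 x * dhat h k.+1 x)).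

Definition e1 (n : nat) : 'cV[R]_n := \col_(i < n) (if val i == 0%N then 1 else 0).

Definition first_comp {n : nat} (U : 'cV[R]_n) : R := ((e1 n)^T *m U) 0 0.

Definition enorm2 {n : nat} (U V : 'cV[R]_n) : R :=
  Num.sqrt (\sum_(i < n) (U i 0) ^+ 2 + \sum_(i < n) (V i 0) ^+ 2).

(* G(U,V) = (G1 V, G2 U) *)
Definition G1 (m : nat) (L : R) (w : nat -> R) (V : 'cV[R]_(m.-1)) : 'cV[R]_(m.-1) :=
  (L / m%:R)^-1 *: (invmx (Mstar m L w) *m V).

Definition G2 (m : nat) (L : R) (F : 'cV[R]_(m.-1)) (U : 'cV[R]_(m.-1)) : 'cV[R]_(m.-1) :=
  - ((L / m%:R)^-1 *: (Sstar m L *m U)) + F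
  + ((L / m%:R)^-1 * Num.max (first_comp U) 0) *: e1 (m.-1).

Definition CN_seq (m : nat) (L : R) (w : nat -> R) (F : 'cV[R]_(m.-1)) (T : R) (N : nat)
  (U0h V0h : 'cV[R]_(m.-1)) (Us Vs : nat -> 'cV[R]_(m.-1)) : Prop :=
  let dt := T / N%:R in
  Us 0%N = U0h /\ Vs 0%N = V0h /\
  forall n : nat, (n < N)%N ->
    dt^-1 *: (Us n.+1 - Us n) = 2^-1 *: (G1 m L w (Vs n.+1) + G1 m L w (Vs n)) /\
    dt^-1 *: (Vs n.+1 - Vs n) = 2^-1 *: (G2 m L F (Us n.+1) + G2 m L F (Us n)).

End Defs.

From HB Require Import structures.
From mathcomp Require Import all_boot all_order all_algebra.
From mathcomp Require Import all_classical all_reals all_analysis.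
From mathcomp Require Import ring lra.
Import Order.TTheory GRing.Theory Num.Theory.
Import numFieldNormedType.Exports.
Local Open Scope classical_set_scope.
Local Open Scope ring_scope.

(* The right-hand side G is globally Lipschitz (a linear map plus the
   1-Lipschitz positive part of u_1), so the exact solution is Lipschitz in
   time and so is G along it.  The mean value theorem, applied componentwise,
   then shows that the exact solution satisfies the trapezoidal rule up to a
   defect O(dt^2) per step.  Subtracting the Crank--Nicolson scheme, the l1
   errors e_n obey e_(n+1) <= e_n + (dt Lg / 2) (e_(n+1) + e_n) + O(dt^2),
   and a discrete Gronwall argument over n <= T / dt steps gives
   e_n <= C n dt^2 exp(2 Lg T) = O(dt). *)

Section L1Norm.
Context {R : realType} {k : nat}.
Implicit Types X Y : 'cV[R]_k.

Definition l1norm X : R := \sum_(i < k) `|X i 0|.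

Lemma l1norm_ge0 X : 0 <= l1norm X.
Proof. by apply: sumr_ge0 => i _. Qed.

Lemma l1norm0 : l1norm 0 = 0.
Proof. by rewrite /l1norm big1 // => i _; rewrite mxE normr0. Qed.

Lemma l1normD X Y : l1norm (X + Y) <= l1norm X + l1norm Y.
Proof.
rewrite /l1norm -big_split /=; apply: ler_sum => i _; rewrite mxE; exact: ler_normD.
Qed.

Lemma l1normN X : l1norm (- X) = l1norm X.
Proof. by apply: eq_bigr => i _; rewrite mxE normrN. Qed.

Lemma l1normZ (a : R) X : l1norm (a *: X) = `|a| * l1norm X.
Proof. by rewrite /l1norm mulr_sumr; apply: eq_bigr => i _; rewrite mxE normrM. Qed.

Lemma l1norm_coord X i : `|X i 0| <= l1norm X.
Proof. by rewrite /l1norm (bigD1 i) //= lerDl; apply: sumr_ge0 => j _. Qed.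

Lemma l1norm_mulmx_le (A : 'M[R]_k) :
  exists2 c, 0 <= c & forall X, l1norm (A *m X) <= c * l1norm X.
Proof.
exists (\sum_(i < k) \sum_(j < k) `|A i j|).
  by apply: sumr_ge0 => i _; apply: sumr_ge0.
move=> X; rewrite /l1norm mulr_suml; apply: ler_sum => i _; rewrite mxE.
apply: (le_trans (ler_norm_sum _ _ _)); rewrite mulr_suml; apply: ler_sum => j _.
by rewrite normrM ler_wpM2l // l1norm_coord.
Qed.

Lemma enorm2_le_l1norm X Y : enorm2 X Y <= l1norm X + l1norm Y.
Proof.
have hX := l1norm_ge0 X; have hY := l1norm_ge0 Y.
set e := l1norm X + l1norm Y.
have e0 : 0 <= e by rewrite addr_ge0.
rewrite /enorm2 -(ger0_norm e0) -sqrtr_sqr ler_sqrt ?sqr_ge0 //.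
have sqr_sum_le Z : l1norm Z <= e -> \sum_(i < k) Z i 0 ^+ 2 <= e * l1norm Z.
  move=> hZ; rewrite /l1norm mulr_sumr; apply: ler_sum => i _.
  rewrite -real_normK ?num_real // expr2; apply: ler_wpM2r => //.
  exact: le_trans (l1norm_coord _ _) hZ.
rewrite expr2 mulrDr; apply: lerD; apply: sqr_sum_le; rewrite /e; lra.
Qed.

End L1Norm.

Section CoordinateCalculus.
Context {R : realType} {k : nat}.
Implicit Types f g : R -> 'cV[R]_k.

Lemma is_derive_coord f t d i :
  is_derive t (1 : R) f d -> is_derive t (1 : R) (fun s => f s i 0) (d i 0).
Proof.
case=> fd dE; apply: DeriveDef; first exact: ((derivable_mxP f t 1).1 fd i 0).
by rewrite -dE derive_mx // mxE.
Qed.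

Lemma continuous_coord (A : set R) f i :
  {within A, continuous f} -> {within A, continuous (fun s => f s i 0)}.
Proof.
by move=> cf x; apply: continuous_comp (cf x) (@coord_continuous _ _ _ i 0 _).
Qed.

Lemma continuous_l1norm_bounded f (T : R) : 0 <= T ->
  {within `[0, T], continuous f} ->
  exists B, forall t, t \in `[0, T] -> l1norm (f t) <= B.
Proof.
move=> T0 cf.
have coord_bounded (i : 'I_k) : exists c : R, forall t, t \in `[0, T] -> `|f t i 0| <= c.
  have ci : {within `[0, T], continuous (fun t => `|f t i 0|)}.
    by move=> x; apply: continuous_comp (continuous_coord _ _ i cf x)
      (@norm_continuous _ _ _).
  by have [c _ hc] := EVT_max T0 ci; exists `|f c i 0|.
have [g hg] := fin_all_exists coord_bounded.
by exists (\sum_(i < k) g i) => t ht; apply: ler_sum => i _; apply: hg.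
Qed.

Lemma lipschitz_comp_bounded (G : 'cV[R]_k -> 'cV[R]_k) (Lg T : R) f :
  0 <= T -> 0 <= Lg ->
  (forall X Y, l1norm (G X - G Y) <= Lg * l1norm (X - Y)) ->
  {within `[0, T], continuous f} ->
  exists B, forall t, t \in `[0, T] -> l1norm (G (f t)) <= B.
Proof.
move=> T0 Lg0 GL cf; have [B hB] := continuous_l1norm_bounded f T T0 cf.
exists (l1norm (G 0) + Lg * B) => t ht.
have := l1normD (G (f t) - G 0) (G 0); rewrite subrK => /le_trans; apply.
rewrite addrC lerD2l; apply: le_trans (GL _ _) _.
by rewrite subr0 ler_wpM2l // hB.
Qed.

Lemma l1norm_increment_le f g (a b B : R) :
  {within `[a, b], continuous f} ->
  (forall x, x \in `]a, b[ -> is_derive x (1 : R) f (g x)) ->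
  (forall x, x \in `[a, b] -> l1norm (g x) <= B) ->
  forall x y, x \in `[a, b] -> y \in `[a, b] -> x <= y ->
  l1norm (f y - f x) <= k%:R * B * (y - x).
Proof.
move=> cf df gB x y xab yab xy.
have -> : k%:R * B * (y - x) = \sum_(i < k) (B * (y - x)).
  by rewrite sumr_const card_ord -mulrA mulr_natl.
apply: ler_sum => i _; rewrite !mxE.
move: xab yab; rewrite !in_itv /= => /andP[ax xb] /andP[ay yb].
have dxy z : z \in `]x, y[ -> is_derive z (1 : R) (fun s => f s i 0) (g z i 0).
  rewrite in_itv /= => /andP[xz zy]; apply/is_derive_coord/df.
  by rewrite in_itv /=; apply/andP; split; lra.
have cxy : {within `[x, y], continuous (fun s => f s i 0)}.
  apply: continuous_subspaceW (continuous_coord _ _ i cf) => z /=.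
  by rewrite !in_itv /= => /andP[h1 h2]; apply/andP; split; lra.
have [c cxy' ->] := MVT_segment xy dxy cxy.
rewrite normrM (@ger0_norm _ (y - x)) ?subr_ge0 // ler_wpM2r ?subr_ge0 //.
apply: le_trans (l1norm_coord _ _) (gB _ _).
by move: cxy'; rewrite !in_itv /= => /andP[h1 h2]; apply/andP; split; lra.
Qed.

(* f' = G(p) with G and p Lipschitz: by the mean value theorem each component
   of f b - f a is (b - a) times a value of G(p) at some c in [a, b], which
   differs from either endpoint value by at most Lg D (b - a). *)
Lemma trapezoid_defect_le f (p : R -> 'cV[R]_k) (G : 'cV[R]_k -> 'cV[R]_k)
    (a b Lg D : R) :
  a <= b -> 0 <= Lg -> 0 <= D ->
  {within `[a, b], continuous f} ->
  (forall x, x \in `]a, b[ -> is_derive x (1 : R) f (G (p x))) ->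
  (forall x y, x \in `[a, b] -> y \in `[a, b] -> x <= y ->
     l1norm (p y - p x) <= D * (y - x)) ->
  (forall X Y, l1norm (G X - G Y) <= Lg * l1norm (X - Y)) ->
  l1norm (f b - f a - ((b - a) / 2) *: (G (p a) + G (p b)))
    <= k%:R * (Lg * D) * (b - a) ^+ 2.
Proof.
move=> ab Lg0 D0 cf df pL GL.
have -> : k%:R * (Lg * D) * (b - a) ^+ 2 = \sum_(i < k) (Lg * D * (b - a) ^+ 2).
  by rewrite sumr_const card_ord -!mulrA mulr_natl.
apply: ler_sum => i _; rewrite !mxE.
have dab z : z \in `]a, b[ -> is_derive z (1 : R) (fun s => f s i 0) (G (p z) i 0).
  by move=> zab; apply/is_derive_coord/df.
have [c cab E] := MVT_segment ab dab (continuous_coord _ _ i cf).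
have aab : a \in `[a, b] by rewrite in_itv /= lexx ab.
have bab : b \in `[a, b] by rewrite in_itv /= lexx ab andbT.
move: (cab); rewrite in_itv /= => /andP[ac cb].
have G_dist x y : x \in `[a, b] -> y \in `[a, b] -> x <= y ->
    `|G (p y) i 0 - G (p x) i 0| <= Lg * D * (b - a).
  move=> xab yab xy; have := l1norm_coord (G (p y) - G (p x)) i.
  rewrite !mxE => /le_trans; apply; apply: le_trans (GL _ _) _.
  rewrite -mulrA ler_wpM2l //; apply: le_trans (pL _ _ xab yab xy) _.
  by rewrite ler_wpM2l //; move: xab yab; rewrite !in_itv /=; lra.
have h1 := G_dist _ _ aab cab ac; have h2 := G_dist _ _ cab bab cb.
have -> : f b i 0 - f a i 0 - (b - a) / 2 * (G (p a) i 0 + G (p b) i 0) =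
    (b - a) / 2 * ((G (p c) i 0 - G (p a) i 0) - (G (p b) i 0 - G (p c) i 0)).
  by rewrite E; field.
have hab : 0 <= (b - a) / 2 by apply: divr_ge0; lra.
rewrite normrM ger0_norm //; apply: le_trans (ler_wpM2l hab (ler_normB _ _)) _.
have -> : Lg * D * (b - a) ^+ 2 = (b - a) / 2 * (2 * (Lg * D * (b - a))) by field.
by apply: ler_wpM2l => //; lra.
Qed.

End CoordinateCalculus.

Section DiscreteGronwall.
Context {R : realType}.

Lemma exprn_1D_le_expR (x : R) n : 0 <= x -> (1 + x) ^+ n <= expR (n%:R * x).
Proof.
move=> x0; rewrite expRM_natl; apply: lerXn2r;
  by rewrite ?nnegrE ?expR_ge0 ?expR_ge1Dx //; lra.
Qed.

(* The implicit recursion is solved for e_(n+1) using q <= 1/2, which gives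
   (1 + q) / (1 - q) <= 1 + 4 q. *)
Lemma discrete_gronwall (e : nat -> R) (N : nat) (q r : R) :
  e 0%N = 0 -> (forall n, 0 <= e n) -> 0 <= q -> q <= 1 / 2 -> 0 <= r ->
  (forall n, (n < N)%N -> e n.+1 <= e n + q * (e n.+1 + e n) + r) ->
  forall n, (n <= N)%N -> e n <= 2 * r * n%:R * (1 + 4 * q) ^+ n.
Proof.
move=> e0 e_ge0 q0 q1 r0 rec; elim=> [|n IH] hn; first by rewrite e0 mulr0 mul0r.
have := rec n hn; have := IH (ltnW hn); have := e_ge0 n; have := e_ge0 n.+1.
set s := 1 + 4 * q; set X := s ^+ n.
have X1 : 1 <= X by rewrite /X exprn_ege1 // /s; lra.
set en := e n; set en1 := e n.+1.
rewrite exprS -/X (mulrC s) -[n.+1]addn1 natrD; set nn := n%:R.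
have nn0 : 0 <= nn by exact: ler0n.
move=> h1 h2 h3 h4.
have hs : 1 + q <= (1 - q) * s by rewrite /s; nra.
have A : (1 - q) * en1 <= (1 + q) * (2 * r * nn * X) + r.
  have : (1 + q) * en <= (1 + q) * (2 * r * nn * X) by apply: ler_wpM2l; lra.
  lra.
have P : 0 <= 2 * r * (nn + 1) * X by rewrite !mulr_ge0 //; lra.
have B1 : (1 + q) * (2 * r * (nn + 1) * X) <= (1 - q) * s * (2 * r * (nn + 1) * X).
  exact: ler_wpM2r.
have B2 : r <= (1 + q) * (2 * r * X).
  have -> : (1 + q) * (2 * r * X) = r * ((1 + q) * (2 * X)) by ring.
  by rewrite -[X in X <= _]mulr1 ler_wpM2l //; nra.
have B : (1 + q) * (2 * r * nn * X) + r <= (1 - q) * (2 * r * (nn + 1) * (X * s)).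
  have -> : (1 - q) * (2 * r * (nn + 1) * (X * s)) =
      (1 - q) * s * (2 * r * (nn + 1) * X) by ring.
  apply: le_trans B1.
  have -> : (1 + q) * (2 * r * (nn + 1) * X) =
      (1 + q) * (2 * r * nn * X) + (1 + q) * (2 * r * X) by ring.
  lra.
by rewrite -(@ler_pM2l _ (1 - q)); [apply: le_trans A B | lra].
Qed.

End DiscreteGronwall.

Section Lipschitz.
Context {R : realType}.

Lemma max0_lipschitz (a b : R) : `|Num.max a 0 - Num.max b 0| <= `|a - b|.
Proof.
have h1 := ler_norm (a - b); have h2 := ler_norm (b - a).
rewrite distrC in h2; rewrite ler_norml.
by case: (ltP a 0) => ha; case: (ltP b 0) => hb; apply/andP; split; lra.
Qed.

Lemma first_comp_lipschitz {n : nat} (U U' : 'cV[R]_n) :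
  `|first_comp U - first_comp U'| <= l1norm (U - U').
Proof.
have -> : first_comp U - first_comp U' = first_comp (U - U').
  by rewrite /first_comp mulmxBr [in RHS]mxE [in X in _ = _ + X]mxE.
rewrite /first_comp mxE; apply: le_trans (ler_norm_sum _ _ _) _.
apply: ler_sum => j _; rewrite normrM !mxE.
by case: ifP => _; rewrite ?normr1 ?normr0 ?mul1r ?mul0r.
Qed.

Lemma G_lipschitz (m : nat) (L : R) w F : exists2 Lg : R, 0 <= Lg &
  (forall V V', l1norm (G1 m L w V - G1 m L w V') <= Lg * l1norm (V - V')) /\
  (forall U U', l1norm (G2 m L F U - G2 m L F U') <= Lg * l1norm (U - U')).
Proof.
have [c1 c10 H1] := l1norm_mulmx_le (invmx (Mstar m L w)).
have [c2 c20 H2] := l1norm_mulmx_le (Sstar m L).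
set h := (L / m%:R)^-1.
have e0 := l1norm_ge0 (e1 m.-1 : 'cV[R]_(m.-1)).
exists (`|h| * c1 + `|h| * c2 + `|h| * l1norm (e1 m.-1)).
  by rewrite !addr_ge0 // mulr_ge0.
split=> [V V' | U U'].
- have hv := l1norm_ge0 (V - V').
  rewrite /G1 -/h -scalerBr -mulmxBr l1normZ.
  apply: le_trans (ler_wpM2l _ (H1 _)) _ => //.
  by rewrite mulrA ler_wpM2r // -addrA lerDl addr_ge0 // mulr_ge0.
- have -> : G2 m L F U - G2 m L F U' = - (h *: (Sstar m L *m (U - U'))) +
      (h * (Num.max (first_comp U) 0 - Num.max (first_comp U') 0)) *: e1 m.-1.
    rewrite /G2 -/h mulmxBr scalerBr mulrBr scalerBl.
    by apply/matrixP => i j; rewrite !mxE; ring.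
  apply: le_trans (l1normD _ _) _; rewrite l1normN !l1normZ normrM.
  have hv := l1norm_ge0 (U - U').
  have A : `|h| * l1norm (Sstar m L *m (U - U')) <= `|h| * c2 * l1norm (U - U').
    by rewrite -mulrA ler_wpM2l.
  have B : `|h| * `|Num.max (first_comp U) 0 - Num.max (first_comp U') 0|
        * l1norm (e1 m.-1) <= `|h| * l1norm (e1 m.-1) * l1norm (U - U').
    rewrite mulrAC ler_wpM2l ?mulr_ge0 //.
    exact: le_trans (max0_lipschitz _ _) (first_comp_lipschitz _ _).
  have C : 0 <= `|h| * c1 * l1norm (U - U') by rewrite !mulr_ge0.
  by rewrite !mulrDl; lra.
Qed.

End Lipschitz.

Section TrapezoidalStep.
Context {R : realType} {k : nat}.

Lemma trapezoid_step_error_le {X0 X1 S0 S1 Y0 Y1 Z0 Z1 : 'cV[R]_k}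
    {G : 'cV[R]_k -> 'cV[R]_k} {dt Lg c : R} :
  0 < dt -> 0 <= Lg ->
  (forall X Y, l1norm (G X - G Y) <= Lg * l1norm (X - Y)) ->
  dt^-1 *: (S1 - S0) = 2^-1 *: (G Z1 + G Z0) ->
  l1norm (X1 - X0 - (dt / 2) *: (G Y0 + G Y1)) <= c ->
  l1norm (X1 - S1) <=
    l1norm (X0 - S0) + c + dt / 2 * Lg * (l1norm (Y1 - Z1) + l1norm (Y0 - Z0)).
Proof.
move=> dt0 Lg0 GL hS hX.
have dt2 : 0 <= dt / 2 by apply: divr_ge0; lra.
have S1E : S1 = S0 + (dt / 2) *: (G Z1 + G Z0).
  have := congr1 (fun v => dt *: v) hS; rewrite !scalerA mulfV ?gt_eqF // scale1r.
  by move=> <-; rewrite addrC subrK.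
have -> : X1 - S1 = (X0 - S0) + (X1 - X0 - (dt / 2) *: (G Y0 + G Y1))
    + (dt / 2) *: ((G Y1 - G Z1) + (G Y0 - G Z0)).
  by rewrite S1E; apply/matrixP => i j; rewrite !mxE; ring.
apply: le_trans (l1normD _ _) _; apply: lerD.
  by apply: le_trans (l1normD _ _) _; apply: lerD.
rewrite l1normZ ger0_norm // -mulrA ler_wpM2l // mulrDr.
by apply: le_trans (l1normD _ _) _; apply: lerD; apply: GL.
Qed.

End TrapezoidalStep.

Section CrankNicolson.
Variables (R : realType) (k : nat) (Ga Gb : 'cV[R]_k -> 'cV[R]_k) (Lg T : R).
Variables (Uh Vh : R -> 'cV[R]_k).
Hypothesis Lg_ge0 : 0 <= Lg.
Hypothesis Ga_lipschitz : forall X Y, l1norm (Ga X - Ga Y) <= Lg * l1norm (X - Y).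
Hypothesis Gb_lipschitz : forall X Y, l1norm (Gb X - Gb Y) <= Lg * l1norm (X - Y).
Hypothesis T_gt0 : 0 < T.
Hypothesis Uh_cont : {within `[0, T], continuous Uh}.
Hypothesis Vh_cont : {within `[0, T], continuous Vh}.
Hypothesis solution_derive : forall t, t \in `]0, T[ ->
  is_derive t 1 Uh (Ga (Vh t)) /\ is_derive t 1 Vh (Gb (Uh t)).

Definition solution_error (t : R) (U V : 'cV[R]_k) : R :=
  l1norm (Uh t - U) + l1norm (Vh t - V).

Definition solution_trapezoid_defect_bound (C : R) := forall a b : R,
  0 <= a -> a <= b -> b <= T ->
  l1norm (Uh b - Uh a - ((b - a) / 2) *: (Ga (Vh a) + Ga (Vh b))) <= C * (b - a) ^+ 2 /\
  l1norm (Vh b - Vh a - ((b - a) / 2) *: (Gb (Uh a) + Gb (Uh b))) <= C * (b - a) ^+ 2.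

Lemma solution_lipschitz : exists2 D, 0 <= D &
  forall x y, x \in `[0, T] -> y \in `[0, T] -> x <= y ->
  l1norm (Uh y - Uh x) <= D * (y - x) /\ l1norm (Vh y - Vh x) <= D * (y - x).
Proof.
have T0 := ltW T_gt0.
have [Ba hBa] := lipschitz_comp_bounded Ga Lg T Vh T0 Lg_ge0 Ga_lipschitz Vh_cont.
have [Bb hBb] := lipschitz_comp_bounded Gb Lg T Uh T0 Lg_ge0 Gb_lipschitz Uh_cont.
set B := `|Ba| + `|Bb|.
have B0 : 0 <= B by rewrite addr_ge0.
have hB t : t \in `[0, T] -> l1norm (Ga (Vh t)) <= B /\ l1norm (Gb (Uh t)) <= B.
  move=> ht; have := hBa t ht; have := hBb t ht.
  have := ler_norm Ba; have := ler_norm Bb; have := normr_ge0 Ba; have := normr_ge0 Bb.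
  rewrite /B; lra.
exists (k%:R * B); first by rewrite mulr_ge0.
move=> x y hx hy xy; split.
- apply: (l1norm_increment_le Uh (fun t => Ga (Vh t)) 0 T B Uh_cont) => // t ht.
    exact: (solution_derive t ht).1.
  exact: (hB t ht).1.
- apply: (l1norm_increment_le Vh (fun t => Gb (Uh t)) 0 T B Vh_cont) => // t ht.
    exact: (solution_derive t ht).2.
  exact: (hB t ht).2.
Qed.

Lemma solution_trapezoid_defect : exists2 C, 0 <= C & solution_trapezoid_defect_bound C.
Proof.
have [D D0 lipD] := solution_lipschitz.
exists (k%:R * (Lg * D)); first by rewrite !mulr_ge0.
move=> a b a0 ab bT.
have mem x : x \in `[a, b] -> x \in `[0, T].
  by rewrite !in_itv /= => /andP[? ?]; apply/andP; split; lra.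
have mem_open x : x \in `]a, b[ -> x \in `]0, T[.
  by rewrite !in_itv /= => /andP[? ?]; apply/andP; split; lra.
have sub : `[a, b] `<=` `[0, T] by move=> x; apply: mem.
split.
- apply: (trapezoid_defect_le Uh Vh Ga a b Lg D ab Lg_ge0 D0) => //.
  + exact: continuous_subspaceW sub Uh_cont.
  + by move=> x hx; apply: (solution_derive x (mem_open x hx)).1.
  + by move=> x y hx hy xy; apply: (lipD x y (mem x hx) (mem y hy) xy).2.
- apply: (trapezoid_defect_le Vh Uh Gb a b Lg D ab Lg_ge0 D0) => //.
  + exact: continuous_subspaceW sub Vh_cont.
  + by move=> x hx; apply: (solution_derive x (mem_open x hx)).2.
  + by move=> x y hx hy xy; apply: (lipD x y (mem x hx) (mem y hy) xy).1.
Qed.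

Lemma cn_one_step_error (C a dt : R) (U0 V0 U1 V1 : 'cV[R]_k) :
  solution_trapezoid_defect_bound C -> 0 <= a -> 0 < dt -> a + dt <= T ->
  dt^-1 *: (U1 - U0) = 2^-1 *: (Ga V1 + Ga V0) ->
  dt^-1 *: (V1 - V0) = 2^-1 *: (Gb U1 + Gb U0) ->
  solution_error (a + dt) U1 V1 <= solution_error a U0 V0
    + dt / 2 * Lg * (solution_error (a + dt) U1 V1 + solution_error a U0 V0)
    + 2 * (C * dt ^+ 2).
Proof.
move=> defect a0 dt0 aT stepU stepV.
have adt : a <= a + dt by rewrite lerDl ltW.
have [dU dV] := defect a (a + dt) a0 adt aT.
rewrite [a + dt - a]addrC addKr in dU dV.
have eU := trapezoid_step_error_le dt0 Lg_ge0 Ga_lipschitz stepU dU.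
have eV := trapezoid_step_error_le dt0 Lg_ge0 Gb_lipschitz stepV dV.
rewrite /solution_error; lra.
Qed.

Lemma cn_error_le (C dt : R) (N : nat) (Us Vs : nat -> 'cV[R]_k) :
  solution_trapezoid_defect_bound C -> 0 <= C -> 0 < dt -> dt * Lg <= 1 ->
  N%:R * dt <= T -> Us 0%N = Uh 0 -> Vs 0%N = Vh 0 ->
  (forall n, (n < N)%N ->
     dt^-1 *: (Us n.+1 - Us n) = 2^-1 *: (Ga (Vs n.+1) + Ga (Vs n)) /\
     dt^-1 *: (Vs n.+1 - Vs n) = 2^-1 *: (Gb (Us n.+1) + Gb (Us n))) ->
  forall n, (n <= N)%N -> solution_error (n%:R * dt) (Us n) (Vs n)
    <= 4 * C * dt ^+ 2 * n%:R * expR (2 * Lg * (n%:R * dt)).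
Proof.
move=> defect C0 dt0 dtLg NT U0E V0E steps n nN.
set t := fun j : nat => j%:R * dt.
have tS j : t j.+1 = t j + dt by rewrite /t -addn1 natrD mulrDl mul1r.
have t_ge0 j : 0 <= t j by rewrite mulr_ge0 // ltW.
have t_le j : (j <= N)%N -> t j <= T.
  by move=> jN; apply: le_trans NT; rewrite ler_pM2r // ler_nat.
set e := fun j => solution_error (t j) (Us j) (Vs j).
have e0 : e 0%N = 0 by rewrite /e /solution_error /t mul0r U0E V0E !subrr l1norm0 addr0.
have e_ge0 j : 0 <= e j by rewrite addr_ge0 ?l1norm_ge0.
have q0 : 0 <= dt / 2 * Lg by rewrite mulr_ge0 // divr_ge0 // ltW.
have q1 : dt / 2 * Lg <= 1 / 2 by rewrite mulrAC ler_pM2r //; lra.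
have r0 : 0 <= 2 * (C * dt ^+ 2) by rewrite !mulr_ge0 // ltW.
have rec j : (j < N)%N ->
    e j.+1 <= e j + dt / 2 * Lg * (e j.+1 + e j) + 2 * (C * dt ^+ 2).
  move=> jN; have [sU sV] := steps j jN; rewrite /e tS.
  by apply: cn_one_step_error => //; rewrite -tS t_le.
apply: le_trans (discrete_gronwall e N _ _ e0 e_ge0 q0 q1 r0 rec n nN) _.
have -> : 4 * C * dt ^+ 2 * n%:R = 2 * (2 * (C * dt ^+ 2)) * n%:R by ring.
apply: ler_wpM2l; first by rewrite !mulr_ge0 // ltW.
apply: le_trans (exprn_1D_le_expR _ _ _) _; first by rewrite mulr_ge0.
by rewrite (_ : n%:R * _ = 2 * Lg * (n%:R * dt)) //; field.
Qed.

Lemma cn_convergence : exists delta K : R, 0 < delta /\ 0 < K /\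
  forall N : nat, (0 < N)%N -> T / N%:R < delta ->
  forall Us Vs : nat -> 'cV[R]_k, Us 0%N = Uh 0 -> Vs 0%N = Vh 0 ->
  (forall n, (n < N)%N ->
     (T / N%:R)^-1 *: (Us n.+1 - Us n) = 2^-1 *: (Ga (Vs n.+1) + Ga (Vs n)) /\
     (T / N%:R)^-1 *: (Vs n.+1 - Vs n) = 2^-1 *: (Gb (Us n.+1) + Gb (Us n))) ->
  forall n, (n <= N)%N ->
    solution_error (n%:R * (T / N%:R)) (Us n) (Vs n) <= K * (T / N%:R).
Proof.
have [C C0 defect] := solution_trapezoid_defect.
have Lg1 : 0 < Lg + 1 := ltr_wpDl Lg_ge0 ltr01.
set E := expR (2 * Lg * T).
have E0 : 0 <= E := expR_ge0 _.
have T0 := ltW T_gt0.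
have KC0 : 0 <= 4 * C * T * E by rewrite !mulr_ge0.
exists (1 / (Lg + 1)), (4 * C * T * E + 1).
split; first by rewrite divr_gt0.
split; first exact: ltr_wpDl KC0 ltr01.
move=> N N0 dt_lt Us Vs U0E V0E steps n nN.
set dt := T / N%:R.
have dt0 : 0 < dt by rewrite divr_gt0 // ltr0n.
have NT : N%:R * dt = T by rewrite /dt mulrC divfK // pnatr_eq0 -lt0n.
have NT_le : N%:R * dt <= T by rewrite NT.
have nT : n%:R * dt <= T by rewrite -NT ler_pM2r // ler_nat.
have dtLg : dt * Lg <= 1.
  by move: dt_lt; rewrite -/dt ltr_pdivlMr ?mul1r; [nra | lra].
apply: le_trans
  (cn_error_le C dt N Us Vs defect C0 dt0 dtLg NT_le U0E V0E steps n nN) _.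
have expE : expR (2 * Lg * (n%:R * dt)) <= E.
  by rewrite ler_expR ler_wpM2l // mulr_ge0.
have -> : 4 * C * dt ^+ 2 * n%:R * expR (2 * Lg * (n%:R * dt))
    = 4 * C * dt * expR (2 * Lg * (n%:R * dt)) * (n%:R * dt) by ring.
apply: le_trans (ler_wpM2l _ nT) _; first by rewrite !mulr_ge0 ?expR_ge0 // ltW.
have -> : 4 * C * dt * expR (2 * Lg * (n%:R * dt)) * T
    = 4 * C * T * expR (2 * Lg * (n%:R * dt)) * dt by ring.
rewrite ler_pM2r //; apply: le_trans (ler_wpM2l _ expE) _; first by rewrite !mulr_ge0.
by rewrite lerDl.
Qed.

End CrankNicolson.

Theorem lemma3p1 (R : realType) (m : nat) (L T : R) (w : nat -> R)
  (F U0 V0 : 'cV[R]_(m.-1)) (Uh Vh : R -> 'cV[R]_(m.-1)) :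
  (1 < m)%N -> 0 < L -> 0 < T -> w 0%N = 0 ->
  Mstar m L w \in unitmx ->
  {within `[0, T], continuous Uh} -> {within `[0, T], continuous Vh} ->
  (forall t, t \in `]0, T[ ->
     is_derive t 1 Uh (G1 m L w (Vh t)) /\ is_derive t 1 Vh (G2 m L F (Uh t))) ->
  Uh 0 = U0 -> Vh 0 = V0 ->
  exists delta K : R, 0 < delta /\ 0 < K /\
    forall N : nat, (0 < N)%N -> T / N%:R < delta ->
    forall Us Vs : nat -> 'cV[R]_(m.-1),
      CN_seq m L w F T N (Uh 0) (Vh 0) Us Vs ->
      forall n : nat, (n <= N)%N ->
        enorm2 (Uh (n%:R * (T / N%:R)) - Us n) (Vh (n%:R * (T / N%:R)) - Vs n)
          <= K * (T / N%:R).
Proof.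
move=> _ _ T0 _ _ cU cV dUV _ _.
have [Lg Lg0 [G1L G2L]] := G_lipschitz m L w F.
have [delta [K [delta0 [K0 cnv]]]] :=
  cn_convergence _ _ _ _ _ _ _ _ Lg0 G1L G2L T0 cU cV dUV.
exists delta, K; do 2 split => //.
move=> N N0 dt_lt Us Vs [U0E [V0E steps]] n nN.
exact: le_trans (enorm2_le_l1norm _ _) (cnv N N0 dt_lt Us Vs U0E V0E steps n nN).
Qed.
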